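(* For all record types $\rho,\rho_1,\rho_2,\rho_3\in\mathbb{T}_R$: (1) if $\rho_1=\rho_2$ then $\mathit{lbl}(\rho_1)=\mathit{lbl}(\rho_2)$; (2) if $\mathit{lbl}(\rho_1)\cap\mathit{lbl}(\rho_2)=\emptyset$ then $\rho_1+\rho_2=\rho_1\cap\rho_2$; (3) if $\mathit{lbl}(\rho_1)\subseteq\mathit{lbl}(\rho_2)$ then $\rho_1+\rho_2=\rho_2$; (4) if $\mathit{lbl}(\rho_2)=\mathit{lbl}(\rho_3)$ then $(\rho_1+\rho_2)\cap(\rho_1+\rho_3)=\rho_1+(\rho_2\cap\rho_3)$.
   Context: $\mathbb{T}\ni\sigma ::= a\mid\omega\mid\sigma_1\to\sigma_2\mid\sigma_1\cap\sigma_2\mid\rho$ and record types $\mathbb{T}_R\ni\rho ::= \langle\rangle\mid\langle l:\sigma\rangle\mid\rho_1+\rho_2\mid\rho_1\cap\rho_2$. Subtyping $\le$ is the least preorder with: $\sigma\le\omega$; $\omega\le\omega\to\omega$; $\sigma\cap\tau\le\sigma$; $\sigma\cap\tau\le\tau$; $\sigma\le\tau_1,\sigma\le\tau_2\Rightarrow\sigma\le\tau_1\cap\tau_2$; $(\sigma\to\tau_1)\cap(\sigma\to\tau_2)\le\sigma\to\tau_1\cap\tau_2$; $\sigma_2\le\sigma_1,\tau_1\le\tau_2\Rightarrow\sigma_1\to\tau_1\le\sigma_2\to\tau_2$; $\langle l:\sigma\rangle\le\langle\rangle$; $\langle l:\sigma\rangle\cap\langle l:\tau\rangle\le\langle l:\sigma\cap\tau\rangle$;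 $\sigma\le\tau\Rightarrow\langle l:\sigma\rangle\le\langle l:\tau\rangle$; $\rho+\langle\rangle=\langle\rangle+\rho=\rho$; $(\rho_1+\rho_2)+\rho_3=\rho_1+(\rho_2+\rho_3)$; $(\rho_1\cap\rho_2)+\rho_3=(\rho_1+\rho_3)\cap(\rho_2+\rho_3)$; $\langle l:\sigma\rangle+(\langle l:\tau\rangle\cap\rho)=\langle l:\tau\rangle\cap\rho$; $\langle l:\sigma\rangle+(\langle l':\tau\rangle\cap\rho)=\langle l':\tau\rangle\cap(\langle l:\sigma\rangle+\rho)$ if $l\neq l'$; $\rho_1\le\rho_2\Rightarrow\rho_1+\rho\le\rho_2+\rho$; $\rho_1=\rho_2\Rightarrow\rho+\rho_1=\rho+\rho_2$. $=$ means $\le$ in both directions. The label map on record types: $\mathit{lbl}(\langle\rangle)=\emptyset$, $\mathit{lbl}(\langle l:\sigma\rangle)=\{l\}$, $\mathit{lbl}(\rho_1\cap\rho_2)=\mathit{lbl}(\rho_1+\rho_2)=\mathit{lbl}(\rho_1)\cup\mathit{lbl}(\rho_2)$. *)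

From mathcomp Require Import all_boot.
Set Implicit Arguments. Unset Strict Implicit. Unset Printing Implicit Defensive.

Definition label := nat.

(* One raw syntax for T and T_R: record types are a subset of types
   (T_R is included in T), and the intersection operator is shared. *)
Inductive ty : Type :=
| Atom  : nat -> ty
| Omega : ty
| Arrow : ty -> ty -> ty
| Inter : ty -> ty -> ty
| Empty : ty
| Field : label -> ty -> ty
| Plus  : ty -> ty -> ty.

(* wft t : t belongs to the grammar T;  isr t : t belongs to T_R. *)
Fixpoint wft (t : ty) : bool :=
  match t with
  | Atom _ | Omega | Empty => true
  | Arrow a b | Inter a b => wft a && wft b
  | Field _ s => wft s
  | Plus a b => isr a && isr b
  end
with isr (t : ty) : bool :=
  match t with
  | Empty => true
  | Field _ s => wft s
  | Plus a b | Inter a b => isr a && isr b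
  | _ => false
  end.

Fixpoint lbl (t : ty) : seq label :=
  match t with
  | Field l _ => [:: l]
  | Inter a b | Plus a b => lbl a ++ lbl b
  | _ => [::]
  end.

(* Equational axioms  A = B  (each yields A <= B and B <= A). *)
Inductive axeq : ty -> ty -> Prop :=
| ax_plus_empty_r r : isr r -> axeq (Plus r Empty) r
| ax_plus_empty_l r : isr r -> axeq (Plus Empty r) r
| ax_plus_assoc r1 r2 r3 : isr r1 -> isr r2 -> isr r3 ->
    axeq (Plus (Plus r1 r2) r3) (Plus r1 (Plus r2 r3))
| ax_plus_inter r1 r2 r3 : isr r1 -> isr r2 -> isr r3 ->
    axeq (Plus (Inter r1 r2) r3) (Inter (Plus r1 r3) (Plus r2 r3))
| ax_plus_field_same l s t r : wft s -> wft t -> isr r ->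
    axeq (Plus (Field l s) (Inter (Field l t) r)) (Inter (Field l t) r)
| ax_plus_field_diff l l' s t r : l <> l' -> wft s -> wft t -> isr r ->
    axeq (Plus (Field l s) (Inter (Field l' t) r))
         (Inter (Field l' t) (Plus (Field l s) r)).

Inductive sub : ty -> ty -> Prop :=
| sub_refl s : wft s -> sub s s
| sub_trans s t u : sub s t -> sub t u -> sub s u
| sub_omega s : wft s -> sub s Omega
| sub_omega_arrow : sub Omega (Arrow Omega Omega)
| sub_inter_l s t : wft s -> wft t -> sub (Inter s t) s
| sub_inter_r s t : wft s -> wft t -> sub (Inter s t) t
| sub_inter_glb s t1 t2 : sub s t1 -> sub s t2 -> sub s (Inter t1 t2)
| sub_arrow_inter s t1 t2 : wft s -> wft t1 -> wft t2 ->
    sub (Inter (Arrow s t1) (Arrow s t2)) (Arrow s (Inter t1 t2))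
| sub_arrow s1 s2 t1 t2 : sub s2 s1 -> sub t1 t2 ->
    sub (Arrow s1 t1) (Arrow s2 t2)
| sub_field_empty l s : wft s -> sub (Field l s) Empty
| sub_field_inter l s t : wft s -> wft t ->
    sub (Inter (Field l s) (Field l t)) (Field l (Inter s t))
| sub_field l s t : sub s t -> sub (Field l s) (Field l t)
| sub_ax_l a b : axeq a b -> sub a b
| sub_ax_r a b : axeq a b -> sub b a
| sub_plus_mono r1 r2 r : isr r1 -> isr r2 -> isr r -> sub r1 r2 ->
    sub (Plus r1 r) (Plus r2 r)
| sub_plus_cong r r1 r2 : isr r -> isr r1 -> isr r2 -> sub r1 r2 -> sub r2 r1 ->
    sub (Plus r r1) (Plus r r2).

Definition teq (s t : ty) : Prop := sub s t /\ sub t s.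

From HB Require Import structures.
From mathcomp Require Import all_boot.

(* Every record type equals, for subtyping, the intersection of a list of
   fields [fields r] computed structurally: intersection concatenates the
   lists and [+] is record override, keeping the fields of the left argument
   whose label is absent on the right (the axioms for [+] push a field through
   the right-hand record and absorb it when its label already occurs there).
   Such an intersection depends only on the set of its fields, so (2)-(4)
   reduce to comparing lists of fields; (1) holds because subtyping can only
   forget labels. *)

Set Implicit Arguments.
Unset Strict Implicit.

Lemma ty_eq_dec : comparable ty.
Proof. by move=> x y; rewrite /decidable; decide equality; apply: eq_comparable. Qed.

HB.instance Definition _ := comparableMixin ty_eq_dec.

Lemma isr_wft t : isr t -> wft t.
Proof. by elim: t => //= a IHa b IHb /andP[/IHa -> /IHb ->]. Qed.

Lemma axeq_wft a b : axeq a b -> wft a && wft b.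
Proof. by case=> /= *; do ![apply/andP; split]; rewrite // isr_wft. Qed.

Lemma sub_wft s t : sub s t -> wft s && wft t.
Proof.
elim=> //= {s t}.
- by move=> s ->.
- by move=> s t u _ /andP[-> _] _ /andP[_ ->].
- by move=> s ->.
- by move=> s t -> ->.
- by move=> s t -> ->.
- by move=> s t1 t2 _ /andP[-> ->] _ /andP[_ ->].
- by move=> s t1 t2 -> -> ->.
- by move=> s1 s2 t1 t2 _ /andP[-> ->] _ /andP[-> ->].
- by move=> l s ->.
- by move=> l s t -> ->.
- by move=> a b /axeq_wft.
- by move=> a b /axeq_wft /andP[-> ->].
- by move=> r1 r2 r -> -> ->.
- by move=> r r1 r2 -> -> ->.
Qed.

Lemma axeq_lbl a b : axeq a b -> lbl a =i lbl b.
Proof.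
case=> /= *; move=> x; rewrite ?cats0 ?mem_cat ?inE //.
- by rewrite orbA.
- by rewrite -orbACA orbb.
- by rewrite orbA orbb.
- by rewrite orbCA.
Qed.

Lemma sub_lbl s t : sub s t -> {subset lbl t <= lbl s}.
Proof.
elim=> //= {s t}.
- by move=> s _ x.
- by move=> s t u _ Hst _ Htu x /Htu /Hst.
- by move=> s t _ _ x; rewrite mem_cat => ->.
- by move=> s t _ _ x; rewrite mem_cat orbC => ->.
- by move=> s t1 t2 _ H1 _ H2 x; rewrite mem_cat => /orP[/H1|/H2].
- by move=> l s t _ _ x; rewrite !inE => ->.
- by move=> l s t _ _ x.
- by move=> a b /axeq_lbl E x; rewrite E.
- by move=> a b /axeq_lbl E x; rewrite E.
- by move=> r1 r2 r _ _ _ _ H x; rewrite !mem_cat => /orP[/H ->|->]; rewrite ?orbT.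
- by move=> r r1 r2 _ _ _ _ H _ _ x; rewrite !mem_cat => /orP[->|/H ->]; rewrite ?orbT.
Qed.

Lemma teq_lbl a b : teq a b -> lbl a =i lbl b.
Proof. by case=> /sub_lbl Hab /sub_lbl Hba x; apply/idP/idP => [/Hba|/Hab]. Qed.

Lemma teq_refl t : wft t -> teq t t.
Proof. by move=> wt; split; apply: sub_refl. Qed.

Lemma teq_sym a b : teq a b -> teq b a.
Proof. by case. Qed.

Lemma teq_trans a b c : teq a b -> teq b c -> teq a c.
Proof. by case=> Hab Hba [Hbc Hcb]; split; apply: sub_trans; eassumption. Qed.

Lemma axeq_teq a b : axeq a b -> teq a b.
Proof. by move=> E; split; [apply: sub_ax_l | apply: sub_ax_r]. Qed.

Lemma teq_inter a a' b b' : teq a a' -> teq b b' -> teq (Inter a b) (Inter a' b').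
Proof.
have inter_mono c c' d d' : sub c c' -> sub d d' -> sub (Inter c d) (Inter c' d').
  move=> Hc Hd; have /andP[wc _] := sub_wft Hc; have /andP[wd _] := sub_wft Hd.
  by apply: sub_inter_glb; [apply: sub_trans _ Hc | apply: sub_trans _ Hd];
    [apply: sub_inter_l | apply: sub_inter_r].
by case=> ? ? [? ?]; split; apply: inter_mono.
Qed.

Lemma teq_plus a a' b b' : isr a -> isr a' -> isr b -> isr b' ->
  teq a a' -> teq b b' -> teq (Plus a b) (Plus a' b').
Proof.
move=> ia ia' ib ib' [Ha Ha'] [Hb Hb']; split.
- exact: sub_trans (sub_plus_mono ia ia' ib Ha) (sub_plus_cong ia' ib ib' Hb Hb').
- exact: sub_trans (sub_plus_mono ia' ia ib' Ha') (sub_plus_cong ia ib' ib Hb' Hb).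
Qed.

Lemma isr_sub_empty r : isr r -> sub r Empty.
Proof.
elim: r => //= [a IHa b _ /andP[ia ib] | _ | l s _ ws | a IHa b IHb /andP[ia ib]].
- exact: sub_trans (sub_inter_l (isr_wft ia) (isr_wft ib)) (IHa ia).
- exact: sub_refl.
- exact: sub_field_empty.
- apply: sub_trans (sub_plus_mono ia _ ib (IHa ia)) _ => //.
  exact: sub_trans (sub_ax_l (ax_plus_empty_l ib)) (IHb ib).
Qed.

Definition record_of (fs : seq (label * ty)) : ty :=
  foldr (fun f r => Inter (Field f.1 f.2) r) Empty fs.

Definition wf_fields (fs : seq (label * ty)) : bool := all (fun f => wft f.2) fs.

Lemma wf_fields_cat fs gs : wf_fields (fs ++ gs) = wf_fields fs && wf_fields gs.
Proof. exact: all_cat. Qed.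

Lemma isr_record_of fs : wf_fields fs -> isr (record_of fs).
Proof. by elim: fs => //= f fs IH /andP[-> /IH]. Qed.

Lemma lbl_record_of fs : lbl (record_of fs) = map fst fs.
Proof. by elim: fs => //= f fs ->. Qed.

Lemma sub_record_of_field fs f :
  wf_fields fs -> f \in fs -> sub (record_of fs) (Field f.1 f.2).
Proof.
elim: fs => //= g fs IH /andP[wg wfs].
have wr := isr_wft (isr_record_of wfs).
rewrite inE => /predU1P[->|f_fs]; first exact: sub_inter_l.
exact: sub_trans (sub_inter_r _ wr) (IH wfs f_fs).
Qed.

Lemma sub_record_of a gs : sub a Empty ->
  (forall f, f \in gs -> sub a (Field f.1 f.2)) -> sub a (record_of gs).
Proof.
move=> a_empty; elim: gs => //= g gs IH a_gs.
apply: sub_inter_glb; first by apply: a_gs; rewrite mem_head.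
by apply: IH => f f_gs; apply: a_gs; rewrite inE f_gs orbT.
Qed.

Lemma teq_record_of_eq_mem fs gs :
  wf_fields fs -> fs =i gs -> teq (record_of fs) (record_of gs).
Proof.
move=> wfs E; have wgs : wf_fields gs by rewrite /wf_fields -(eq_all_r E).
split; apply: sub_record_of.
- exact: isr_sub_empty (isr_record_of wfs).
- by move=> f; rewrite -E; apply: sub_record_of_field.
- exact: isr_sub_empty (isr_record_of wgs).
- by move=> f; rewrite E; apply: sub_record_of_field.
Qed.

Lemma teq_inter_record_of fs gs : wf_fields fs -> wf_fields gs ->
  teq (Inter (record_of fs) (record_of gs)) (record_of (fs ++ gs)).
Proof.
move=> wfs wgs; have wF := isr_wft (isr_record_of wfs).
have wG := isr_wft (isr_record_of wgs).
have wFG : wf_fields (fs ++ gs) by rewrite wf_fields_cat wfs.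
split.
- apply: sub_record_of => [|f].
    exact: sub_trans (sub_inter_l wF wG) (isr_sub_empty (isr_record_of wfs)).
  rewrite mem_cat => /orP[f_fs | f_gs].
  + exact: sub_trans (sub_inter_l wF wG) (sub_record_of_field wfs f_fs).
  + exact: sub_trans (sub_inter_r wF wG) (sub_record_of_field wgs f_gs).
- have FG_empty := isr_sub_empty (isr_record_of wFG).
  by apply: sub_inter_glb; apply: sub_record_of => // f f_in;
    apply: sub_record_of_field; rewrite // mem_cat f_in ?orbT.
Qed.

Lemma teq_field_record_of l s : wft s -> teq (Field l s) (record_of [:: (l, s)]).
Proof.
move=> ws; split; last exact: sub_inter_l.
by apply: sub_inter_glb; [apply: sub_refl | apply: sub_field_empty].
Qed.

Lemma teq_plus_field_record_of l s gs : wft s -> wf_fields gs ->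
  teq (Plus (Field l s) (record_of gs))
      (if l \in map fst gs then record_of gs else record_of ((l, s) :: gs)).
Proof.
move=> ws; elim: gs => [_ | [l' t] gs IH /andP[wt wgs]] /=.
  exact: teq_trans (axeq_teq (ax_plus_empty_r _)) (teq_field_record_of l ws).
have wG := isr_record_of wgs.
rewrite inE eq_sym; case: eqP => [-> | ne_l'l] /=.
  exact: axeq_teq (ax_plus_field_same l ws wt wG).
apply: teq_trans (axeq_teq (ax_plus_field_diff (nesym ne_l'l) ws wt wG)) _.
have Fl' : teq (Field l' t) (Field l' t) by apply: teq_refl.
case: (l \in map fst gs) (IH wgs) => IH_gs; first exact: teq_inter Fl' IH_gs.
apply: teq_trans (teq_inter Fl' IH_gs) _.
have wl'ls : wf_fields [:: (l', t), (l, s) & gs] by rewrite /= wt ws.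
apply: (teq_record_of_eq_mem (gs := [:: (l, s), (l', t) & gs]) wl'ls) => f.
by rewrite !inE orbCA.
Qed.

Definition override (fs gs : seq (label * ty)) : seq (label * ty) :=
  [seq f <- fs | f.1 \notin map fst gs] ++ gs.

Lemma wf_fields_override fs gs :
  wf_fields fs -> wf_fields gs -> wf_fields (override fs gs).
Proof.
move=> wfs wgs; rewrite wf_fields_cat wgs andbT /wf_fields all_filter.
by apply: sub_all wfs => f /= ->; rewrite implybT.
Qed.

Lemma teq_plus_record_of fs gs : wf_fields fs -> wf_fields gs ->
  teq (Plus (record_of fs) (record_of gs)) (record_of (override fs gs)).
Proof.
move=> + wgs; have wG := isr_record_of wgs.
elim: fs => [_ | [l s] fs IH /andP[ws wfs]] /=.
  exact: axeq_teq (ax_plus_empty_l wG).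
have wF := wf_fields_override wfs wgs.
have wlsG : wf_fields ((l, s) :: gs) by rewrite /= ws.
have wGF : wf_fields (gs ++ override fs gs) by rewrite wf_fields_cat wgs wF.
have wlsGF : wf_fields ((l, s) :: gs ++ override fs gs) by rewrite /= ws.
have wFl : isr (Field l s) by [].
apply: teq_trans (axeq_teq (ax_plus_inter wFl (isr_record_of wfs) wG)) _.
apply: teq_trans (teq_inter (teq_plus_field_record_of l ws wgs) (IH wfs)) _.
have -> : override ((l, s) :: fs) gs =
    if l \in map fst gs then override fs gs else (l, s) :: override fs gs.
  by rewrite /override /=; case: (l \in _).
case: ifP => _.
- apply: teq_trans (teq_inter_record_of wgs wF) _.
  apply: teq_record_of_eq_mem wGF _ => f.
  by rewrite /override !mem_cat orbCA orbb.
- apply: teq_trans (teq_inter_record_of wlsG wF) _.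
  apply: teq_record_of_eq_mem wlsGF _ => f.
  by rewrite !inE /override !mem_cat; congr (_ || _); rewrite orbCA orbb.
Qed.

Fixpoint fields (r : ty) : seq (label * ty) :=
  match r with
  | Field l s => [:: (l, s)]
  | Inter a b => fields a ++ fields b
  | Plus a b => override (fields a) (fields b)
  | _ => [::]
  end.

Lemma wf_fields_fields r : isr r -> wf_fields (fields r).
Proof.
elim: r => //= [a IHa b IHb /andP[/IHa wa /IHb wb] | l s _ -> |
                a IHa b IHb /andP[/IHa wa /IHb wb]] //.
- by rewrite wf_fields_cat wa.
- exact: wf_fields_override.
Qed.

Lemma teq_fields r : isr r -> teq r (record_of (fields r)).
Proof.
elim: r => //= [a IHa b IHb /andP[ia ib] | _ | l s _ ws | a IHa b IHb /andP[ia ib]].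
- apply: teq_trans (teq_inter (IHa ia) (IHb ib)) _.
  exact: teq_inter_record_of (wf_fields_fields ia) (wf_fields_fields ib).
- exact: teq_refl.
- exact: teq_field_record_of.
- have wa := wf_fields_fields ia; have wb := wf_fields_fields ib.
  apply: teq_trans
    (teq_plus ia (isr_record_of wa) ib (isr_record_of wb) (IHa ia) (IHb ib)) _.
  exact: teq_plus_record_of.
Qed.

Lemma lbl_fields r : isr r -> map fst (fields r) =i lbl r.
Proof. by move=> ir l; rewrite -lbl_record_of (teq_lbl (teq_fields ir)). Qed.

Lemma teq_fields_eq_mem a b : isr a -> isr b -> fields a =i fields b -> teq a b.
Proof.
move=> ia ib E; apply: teq_trans (teq_fields ia) _.
apply: teq_trans (teq_sym (teq_fields ib)).
exact: teq_record_of_eq_mem (wf_fields_fields ia) E.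
Qed.

Lemma teq_plus_disjoint r1 r2 : isr r1 -> isr r2 ->
  (forall l, l \in lbl r1 -> l \in lbl r2 -> False) -> teq (Plus r1 r2) (Inter r1 r2).
Proof.
move=> i1 i2 disj; apply: teq_fields_eq_mem; rewrite /= ?i1 ?i2 // /override.
suff -> : [seq f <- fields r1 | f.1 \notin map fst (fields r2)] = fields r1 by [].
apply/all_filterP/allP => f f_r1; apply/negP; rewrite lbl_fields // => /(disj f.1).
by apply; rewrite -lbl_fields // map_f.
Qed.

Lemma teq_plus_sub_lbl r1 r2 : isr r1 -> isr r2 ->
  {subset lbl r1 <= lbl r2} -> teq (Plus r1 r2) r2.
Proof.
move=> i1 i2 sub12; apply: teq_fields_eq_mem; rewrite /= ?i1 ?i2 // /override.
suff -> : [seq f <- fields r1 | f.1 \notin map fst (fields r2)] = [::] by [].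
rewrite -(filter_pred0 (fields r1)); apply: eq_in_filter => f f_r1 /=.
by rewrite lbl_fields // sub12 // -lbl_fields // map_f.
Qed.

Lemma teq_inter_plus_eq_lbl r1 r2 r3 : isr r1 -> isr r2 -> isr r3 -> lbl r2 =i lbl r3 ->
  teq (Inter (Plus r1 r2) (Plus r1 r3)) (Plus r1 (Inter r2 r3)).
Proof.
move=> i1 i2 i3 E; apply: teq_fields_eq_mem; rewrite /= ?i1 ?i2 ?i3 // /override.
have E23 : map fst (fields r2) =i map fst (fields r3) by move=> l; rewrite !lbl_fields.
set F := [seq f <- fields r1 | f.1 \notin map fst (fields r2)].
have -> : [seq f <- fields r1 | f.1 \notin map fst (fields r3)] = F.
  by apply: eq_filter => f; rewrite E23.
have -> : [seq f <- fields r1 | f.1 \notin map fst (fields r2 ++ fields r3)] = F.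
  by apply: eq_filter => f; rewrite map_cat mem_cat -E23 orbb.
by move=> f; rewrite !mem_cat; case: (f \in F); rewrite ?orbT.
Qed.

Unset Implicit Arguments.

Theorem lemma3p10 (r1 r2 r3 : ty) :
  isr r1 -> isr r2 -> isr r3 ->
  (teq r1 r2 -> lbl r1 =i lbl r2) /\
  ((forall l, l \in lbl r1 -> l \in lbl r2 -> False) ->
     teq (Plus r1 r2) (Inter r1 r2)) /\
  ({subset lbl r1 <= lbl r2} -> teq (Plus r1 r2) r2) /\
  (lbl r2 =i lbl r3 ->
     teq (Inter (Plus r1 r2) (Plus r1 r3)) (Plus r1 (Inter r2 r3))).
Proof.
move=> i1 i2 i3; split; first exact: teq_lbl.
split; first exact: teq_plus_disjoint.
split; first exact: teq_plus_sub_lbl.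
exact: teq_inter_plus_eq_lbl.
Qed.
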